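(* Every finite group with the Magnus Property is solvable.
   Context: For a group $G$ and $x\in G$, $x^G$ denotes the conjugacy class of $x$ and $\langle x^G\rangle$ the normal closure of $x$ in $G$. A group $G$ has the Magnus Property (MP) if whenever $x,y\in G$ satisfy $\langle x^G\rangle=\langle y^G\rangle$, then $x$ is conjugate in $G$ to $y$ or to $y^{-1}$. *)

From mathcomp Require Import all_boot all_fingroup all_solvable.
Set Implicit Arguments. Unset Strict Implicit. Unset Printing Implicit Defensive.
Local Open Scope group_scope.

(* Magnus Property for a finite group G (given as a subgroup of a finGroupType):
   for all x, y in G, if the normal closures of x and y in G coincide, then x
   is conjugate in G to y or to y^-1.  The normal closure of x in G is the
   subgroup generated by the G-conjugacy class x ^: G. *)
Definition magnus_property (gT : finGroupType) (G : {set gT}) : Prop :=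
  forall x y : gT, x \in G -> y \in G ->
    <<x ^: G>> = <<y ^: G>> -> (x \in y ^: G) \/ (x \in y^-1 ^: G).

(* Take a normal subgroup L of G minimal among the non-solvable ones, and R the
   largest normal subgroup of G properly contained in L; it contains every such
   subgroup because proper ones are solvable and so is their product with R.
   Each x in L \ R then has normal closure exactly L, so by the Magnus Property
   all these elements have the same order n.  For a prime p dividing n and
   y in L \ R, y^p has order n/p, hence lies in R: L/R has exponent p, is a
   p-group, and L would be solvable. *)

From mathcomp Require Import all_boot all_fingroup all_solvable.

Set Implicit Arguments.
Unset Strict Implicit.
Unset Printing Implicit Defensive.

Local Open Scope group_scope.

Section MagnusSolvable.

Variable gT : finGroupType.
Implicit Types G H K L R : {group gT}.

Lemma solvableY H K :
  H \subset 'N(K) -> solvable H -> solvable K -> solvable (H <*> K).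
Proof.
move=> nKH solH solK; have nK_HK : K <| H <*> K.
  by rewrite /normal joing_subr join_subG nKH normG.
by rewrite (series_sol nK_HK) solK quotientYidr // quotient_sol.
Qed.

Lemma normal_closure_normal G x : x \in G -> <<x ^: G>> <| G.
Proof.
move=> xG; rewrite /normal norms_gen ?class_norm // andbT gen_subG.
exact: class_subG.
Qed.

Lemma normal_closure_min G H x : H <| G -> x \in H -> <<x ^: G>> \subset H.
Proof. by move=> nHG xH; rewrite gen_subG class_sub_norm ?normal_norm. Qed.

Lemma normal_closure_eq G L R x :
    L <| G -> (forall H, H <| G -> H \proper L -> H \subset R) ->
  x \in L :\: R -> <<x ^: G>> = L.
Proof.
move=> nLG maxR /setDP[xL xR]; have sKL := normal_closure_min nLG xL.
apply/eqP; rewrite eqEsubset sKL /=; apply: contraR xR => sLK.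
have xG : x \in G := subsetP (normal_sub nLG) x xL.
have sKR : <<x ^: G>> \subset R.
  by apply: maxR (normal_closure_normal xG) _; rewrite properE sKL.
by rewrite (subsetP sKR) ?mem_gen ?class_refl.
Qed.

Lemma nonsolvable_normal_section G : ~~ solvable G ->
  exists L R, [/\ L <| G, R <| L, solvable R, ~~ solvable L
                & forall H, H <| G -> H \proper L -> H \subset R].
Proof.
move=> nsolG.
have [L] : {L : {group gT} |
    mingroup L (fun H : {group gT} => (H <| G) && ~~ solvable H)}.
  by apply: ex_mingroup; exists G; rewrite normal_refl nsolG.
case/mingroupP=> /andP[nLG nsolL] minL.
have solP H : H <| G -> H \proper L -> solvable H.
  move=> nHG /andP[sHL nsLH]; apply: contraT => nsolH.
  by rewrite -(minL H) ?nHG ?nsolH ?sHL ?subxx in nsLH.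
have [R] : {R : {group gT} |
    maxgroup R (fun H : {group gT} => (H <| G) && (H \proper L))}.
  apply: ex_maxgroup; exists 1%G; rewrite normal1 proper1G.
  by apply: contraNneq nsolL => ->; apply: solvable1.
case/maxgroupP=> /andP[nRG pRL] maxR; have solR := solP R nRG pRL.
exists L, R; split=> //.
  exact: normalS (proper_sub pRL) (normal_sub nLG) nRG.
move=> H nHG pHL; have nHRG : H <*> R <| G by apply: normalY.
have solHR : solvable (H <*> R).
  apply: solvableY (solP H nHG pHL) solR.
  exact: subset_trans (normal_sub nHG) (normal_norm nRG).
have pHRL : H <*> R \proper L.
  rewrite properEneq join_subG !proper_sub ?andbT //.
  by apply: contraNneq nsolL => <-.
by rewrite -(maxR (H <*> R)%G) ?nHRG ?pHRL ?joing_subr ?joing_subl.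
Qed.

Lemma pgroup_quotient_of_expn p L R :
  prime p -> L \subset 'N(R) -> {in L, forall y, y ^+ p \in R} ->
  p.-group (L / R).
Proof.
move=> p_pr nRL expLR; apply/pgroupP=> q q_pr /(Cauchy q_pr)[u].
case/morphimP=> y Ny yL ->{u} oy.
have: #[coset R y] %| p by rewrite order_dvdn -morphX //= coset_id ?expLR.
by rewrite oy dvdn_prime2.
Qed.

Lemma quotient_pgroup_of_const_order L R :
  L \subset 'N(R) -> {in L :\: R &, forall x y, #[x] = #[y]} ->
  exists p : nat, p.-group (L / R).
Proof.
move=> nRL ordLR; have [sLR | /subsetPn[x xL xR]] := boolP (L \subset R).
  by exists 2; rewrite quotientS1 ?pgroup1.
have x_gt1 : 1 < #[x] by rewrite order_gt1; apply: contraNneq xR => ->.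
set p := pdiv #[x]; have p_pr : prime p := pdiv_prime x_gt1.
exists p; apply: (pgroup_quotient_of_expn p_pr nRL) => y yL.
apply: contraT => ypR; have yR : y \notin R by apply: contra ypR; apply: groupX.
have p_dv_y : p %| #[y] by rewrite -(ordLR x) ?inE ?xR ?yR // pdiv_dvd.
have := ordLR (y ^+ p) y; rewrite !inE ypR yR yL groupX // orderXdiv //.
by move/(_ isT isT)/eqP; rewrite ltn_eqF // ltn_Pdiv ?prime_gt1 ?order_gt0.
Qed.

Lemma magnus_order_eq G x y : magnus_property G -> x \in G -> y \in G ->
  <<x ^: G>> = <<y ^: G>> -> #[x] = #[y].
Proof.
by move=> MP xG yG /(MP x y xG yG)[] /imsetP[g _ ->]; rewrite orderJ ?orderV.
Qed.

End MagnusSolvable.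

Theorem proposition1p1 (gT : finGroupType) (G : {group gT}) :
  magnus_property G -> solvable G.
Proof.
move=> MP; apply: contraT => nsolG.
have [L [R [nLG nRL solR nsolL maxR]]] := nonsolvable_normal_section nsolG.
have [p pLR] : exists p : nat, p.-group (L / R).
  apply: quotient_pgroup_of_const_order (normal_norm nRL) _ => x y xLR yLR.
  have sLR_G : L :\: R \subset G.
    exact: subset_trans (subsetDl L R) (normal_sub nLG).
  apply: (magnus_order_eq MP); rewrite ?(subsetP sLR_G) //.
  by rewrite !(normal_closure_eq nLG maxR).
by move: nsolL; rewrite (series_sol nRL) solR (pgroup_sol pLR).
Qed.
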